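(* Let $H$ be a set of pairwise disjoint half-open intervals of $\mathbb{R}$. Let $m_1,\dots,m_I$ be distinct interval-domain monomials with $\mathrm{supp}\,m_i\in H$ for all $i\in[I]$, let $g_1,\dots,g_J$ be distinct Gaussian density functions, and let $e_1,\dots,e_K$ be distinct exponential density functions. Then the set $\{m_1,\dots,m_I,g_1,\dots,g_J,e_1,\dots,e_K\}$ is linearly independent in $\mathcal{L}_1(\mathbb{R},\lambda_{\mathit{Leb}})$.
   Context: An interval-domain monomial is a function $x\mapsto x^k\chi_{[a,b)}(x)$ with $k\in\mathbb{N}\cup\{0\}$ and $a<b$, where $\chi_E$ is the characteristic function of $E$; $\mathrm{supp}\,f=\{x\mid f(x)>0\}$. A Gaussian density function is $x\mapsto\frac{1}{\sigma\sqrt{2\pi}}\exp\left(-\frac{(x-\mu)^2}{2\sigma^2}\right)$ with $\mu\in\mathbb{R}$, $\sigma>0$. An exponential density function is $x\mapsto\lambda e^{-\lambda x}\chi_{[0,\infty)}(x)$ with $\lambda>0$. $\mathcal{L}_1(\mathbb{R},\lambda_{\mathit{Leb}})$ is the space of Lebesgue-integrable functions modulo equality almost everywhere. *)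

From HB Require Import structures.
From mathcomp Require Import all_boot all_order all_algebra.
From mathcomp Require Import all_classical all_reals all_analysis.
Set Implicit Arguments. Unset Strict Implicit. Unset Printing Implicit Defensive.
Import Order.TTheory GRing.Theory Num.Theory.
Import numFieldNormedType.Exports.
Local Open Scope classical_set_scope.
Local Open Scope ring_scope.

Definition chi {R : realType} (E : set R) (x : R) : R :=
  if `[< E x >] then 1 else 0.

(* supp f = {x | f x > 0} (convention of the paper) *)
Definition supp {R : realType} (f : R -> R) : set R := [set x | 0 < f x].

(* Interval-domain monomial x |-> x^k chi_[a,b)(x)  (a < b required separately) *)
Definition imono {R : realType} (k : nat) (a b : R) (x : R) : R :=
  x ^+ k * chi [set` `[a, b[] x.

Definition gauss {R : realType} (mu sigma : R) (x : R) : R :=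
  (sigma * Num.sqrt (2 * pi))^-1 * expR (- ((x - mu) ^+ 2) / (2 * sigma ^+ 2)).

Definition expdens {R : realType} (lam : R) (x : R) : R :=
  lam * expR (- (lam * x)) * chi [set` `[0, +oo[] x.

Definition half_open_interval {R : realType} (h : set R) : Prop :=
  exists c d : R, c < d /\ h = [set` `[c, d[].

From HB Require Import structures.
From mathcomp Require Import all_boot all_order all_algebra.
From mathcomp Require Import all_classical all_reals all_analysis.
From mathcomp Require Import measurable_realfun ring lra.
Set Implicit Arguments.
Unset Strict Implicit.
Unset Printing Implicit Defensive.

Import Order.TTheory GRing.Theory Num.Theory.
Import numFieldNormedType.Exports.
Local Open Scope classical_set_scope.
Local Open Scope ring_scope.

(* Beyond the right end of all monomial supports only the Gaussian and
   exponential terms remain, each a constant times exp (a x^2 + b x) with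
   pairwise distinct (a, b).  Dividing by the term with nonzero coefficient
   and lexicographically largest (a, b) turns that coefficient into the limit
   at +oo of a function vanishing near +oo, a contradiction.
   On the support of one monomial the remaining combination is a polynomial
   vanishing on an interval; monomials with equal support and degree coincide,
   so its coefficients are exactly the monomial coefficients.  Almost-everywhere
   vanishing turns into pointwise vanishing by continuity, since nonempty open
   sets have positive Lebesgue measure. *)

(* The generic hint for almost-everywhere filters does not fire for Lebesgue
   measure on [R]. *)
#[local] Instance lebesgue_ae_filter (R : realType) :
  Filter (nbhs (almost_everywhere (@lebesgue_measure R))) :=
  ae_filter_ringOfSetsType _.

Section ContinuousAe.
Context {R : realType}.

Lemma continuous_ae_eq0 (U : set R) (f : R -> R) : open U ->
  {ae (@lebesgue_measure R), forall x, U x -> f x = 0} ->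
  (forall x, U x -> {for x, continuous f}) ->
  forall x, U x -> f x = 0.
Proof.
move=> oU [N [mN N0 sN]] fc x Ux; apply: contrapT => /eqP fx0.
have : \forall y \near x, U y /\ f y != 0.
  near=> y; split; near: y; first exact: oU.
  exact: cvgr_neq0 (fc x Ux) fx0.
move=> /nbhs_ballP[e /= e0 Ue].
have : (lebesgue_measure (ball x e) <= lebesgue_measure N)%E.
  by apply: le_measure; rewrite ?inE//; [exact: measurable_ball|
    move=> y /Ue[Uy /eqP fy0]; apply: sN => /(_ Uy)].
rewrite N0 lebesgue_measure_ball ?(ltW e0)// lee_fin.
by rewrite leNgt pmulrn_rgt0.
Unshelve. all: end_near. Qed.

End ContinuousAe.

Section ExpQuad.
Context {R : realType}.

Definition expquad (a b x : R) : R := expR (a * x ^+ 2 + b * x).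

Lemma continuous_expquad (a b : R) : continuous (expquad a b).
Proof.
move=> x; apply: continuous_comp; last exact: continuous_expR.
by apply: cvgD; apply: cvgMl_tmp; [rewrite expr2; apply: cvgM|]; exact: cvg_id.
Qed.

Lemma expquadB (a b a' b' x : R) :
  expquad a b x / expquad a' b' x = expquad (a - a') (b - b') x.
Proof. by rewrite /expquad -expRN -expRD; congr expR; ring. Qed.

Lemma expquad_cvgNy (a b : R) : a < 0 \/ (a = 0 /\ b < 0) ->
  a * x ^+ 2 + b * x @[x --> +oo] --> -oo.
Proof.
move=> ab; apply/cvgrNyPler => M _.
have normM : - `|M| <= M by rewrite lerNl ler_normr lexx orbT.
have normb : b <= `|b| := ler_norm b.
case: ab => [a0|[-> b0]]; near=> x.
- have x1 : 1 <= x by near: x; apply: nbhs_pinfty_ge; exact: num_real.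
  have : (`|M| + `|b|) / - a <= x.
    by near: x; apply: nbhs_pinfty_ge; exact: num_real.
  rewrite ler_pdivrMr ?oppr_gt0 // => xa.
  have M0 : 0 <= `|M| := normr_ge0 M.
  nra.
- have : `|M| / - b <= x by near: x; apply: nbhs_pinfty_ge; exact: num_real.
  rewrite ler_pdivrMr ?oppr_gt0 // mul0r add0r => xb.
  nra.
Unshelve. all: end_near. Qed.

Lemma expquad_cvg0 (a b : R) : a < 0 \/ (a = 0 /\ b < 0) ->
  expquad a b x @[x --> +oo] --> 0.
Proof.
move=> ab; apply: (cvg_comp _ expR (expquad_cvgNy ab)).
exact/cvgNy_compNP/cvgr_expR.
Qed.

Lemma expquad_sum_cvg_lead (T : finType) (c a b : T -> R) (t0 : T) :
  (forall t, t != t0 -> c t != 0 -> a t < a t0 \/ (a t = a t0 /\ b t < b t0)) ->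
  \sum_t c t * expquad (a t - a t0) (b t - b t0) x @[x --> +oo] --> c t0.
Proof.
move=> lead.
have -> : c t0 = \sum_t (if t == t0 then c t else 0).
  by rewrite -big_mkcond big_pred1_eq.
apply: (@cvg_big _ _ +%R 0 xpredT add_continuous) => // t _.
have [->|tt0] := eqVneq t t0.
  under eq_fun do rewrite !subrr /expquad !mul0r addr0 expR0 mulr1.
  exact: cvg_cst.
have [->|ct0] := eqVneq (c t) 0.
  under eq_fun do rewrite mul0r.
  exact: cvg_cst.
rewrite -(mulr0 (c t)); apply: cvgMl_tmp; apply: expquad_cvg0.
by case: (lead t tt0 ct0) => [?|[-> ?]]; [left|right]; rewrite ?subrr ?subr_lt0.
Qed.

Lemma expquad_indep (T : finType) (c a b : T -> R) :
  injective (fun t => (a t, b t)) ->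
  (\forall x \near +oo, \sum_t c t * expquad (a t) (b t) x = 0) ->
  forall t, c t = 0.
Proof.
move=> ab_inj sum0 t; apply: contrapT => /eqP ct0.
(* [t0] maximizes [(a, b)] lexicographically over the support of [c]. *)
have [t1 ct1 a_max] := @arg_maxP _ _ _ t (fun t => c t != 0) a ct0.
have ct1' : (c t1 != 0) && (a t1 == a t1) by rewrite ct1 eqxx.
have [t0 /andP[ct00 /eqP a01] b_max] :=
  @arg_maxP _ _ _ t1 (fun t => (c t != 0) && (a t == a t1)) b ct1'.
have lead t' : t' != t0 -> c t' != 0 ->
    a t' < a t0 \/ (a t' = a t0 /\ b t' < b t0).
  move=> t't0 ct'; rewrite a01.
  have [aeq|] := eqVneq (a t') (a t1); last first.
    by move=> ne; left; rewrite lt_neqAle ne; exact: a_max.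
  right; split => //; rewrite lt_neqAle; apply/andP; split.
    by apply: contra t't0 => /eqP bt'; apply/eqP/ab_inj; rewrite /= aeq bt' a01.
  by apply: b_max; rewrite ct' aeq eqxx.
have lim0 : \sum_t c t * expquad (a t - a t0) (b t - b t0) x @[x --> +oo] --> 0.
  apply: cvg_near_cst; near=> x.
  under eq_bigr do rewrite -expquadB mulrA.
  by rewrite -mulr_suml (near sum0 x) ?mul0r.
by move/eqP: ct00; apply; exact: (cvg_unique _ (expquad_sum_cvg_lead lead) lim0).
Unshelve. all: end_near. Qed.

End ExpQuad.

Section GaussExpdens.
Context {R : realType}.

Definition gauss_scale (m s : R) : R :=
  (s * Num.sqrt (2 * pi))^-1 * expR (- (m ^+ 2) / (2 * s ^+ 2)).

Lemma gauss_scale_gt0 (m s : R) : 0 < s -> 0 < gauss_scale m s.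
Proof.
move=> s0; rewrite mulr_gt0 ?expR_gt0 // invr_gt0 mulr_gt0 //.
by rewrite sqrtr_gt0 mulr_gt0 // pi_gt0.
Qed.

Lemma gaussE (m s x : R) : 0 < s ->
  gauss m s x = gauss_scale m s * expquad (- (2 * s ^+ 2)^-1) (m / s ^+ 2) x.
Proof.
move=> s0; rewrite /gauss /gauss_scale /expquad -[RHS]mulrA -expRD.
by congr (_ * expR _); field; rewrite gt_eqF.
Qed.

Lemma expdensE (l x : R) : 0 <= x -> expdens l x = l * expquad 0 (- l) x.
Proof.
move=> x0; rewrite /expdens /chi /expquad asboolT ?mulr1; last first.
  by rewrite /= in_itv /= x0.
by rewrite mul0r add0r mulNr.
Qed.

Lemma gauss_param_inj (m s m' s' : R) : 0 < s -> 0 < s' ->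
  (2 * s ^+ 2)^-1 = (2 * s' ^+ 2)^-1 -> m / s ^+ 2 = m' / s' ^+ 2 ->
  m = m' /\ s = s'.
Proof.
move=> s0 s'0 /invr_inj /(mulfI (x := 2)) ss' mm'.
have {ss'} ss' : s = s'.
  by apply/eqP; rewrite -(@eqrXn2 _ 2) ?ltW ?ss'.
move: mm'; rewrite ss' => /(mulIf _) -> //.
by rewrite invr_eq0 expf_eq0 gt_eqF.
Qed.

Variables (J K : nat) (mu sg : 'I_J -> R) (lam : 'I_K -> R).
Hypothesis sg_gt0 : forall j, 0 < sg j.
Hypothesis gauss_inj : injective (fun j => gauss (mu j) (sg j)).
Hypothesis lam_gt0 : forall k, 0 < lam k.
Hypothesis expdens_inj : injective (fun k => expdens (lam k)).

(* [inl j] indexes the [j]th Gaussian and [inr k] the [k]th exponential density,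
   each written as [mix_weight * expquad mix_quad_coef mix_lin_coef] on
   [[0, +oo[]. *)
Definition mix_quad_coef (t : 'I_J + 'I_K) : R :=
  if t is inl j then - (2 * sg j ^+ 2)^-1 else 0.

Definition mix_lin_coef (t : 'I_J + 'I_K) : R :=
  match t with inl j => mu j / sg j ^+ 2 | inr k => - lam k end.

Definition mix_weight (beta : 'I_J -> R) (gamma : 'I_K -> R)
    (t : 'I_J + 'I_K) : R :=
  match t with
  | inl j => beta j * gauss_scale (mu j) (sg j)
  | inr k => gamma k * lam k
  end.

Lemma gauss_expdens_sumE beta gamma x : 0 <= x ->
  \sum_j beta j * gauss (mu j) (sg j) x + \sum_k gamma k * expdens (lam k) x =
  \sum_t mix_weight beta gamma t * expquad (mix_quad_coef t) (mix_lin_coef t) x.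
Proof.
move=> x0; rewrite big_sumType; congr (_ + _); apply: eq_bigr => t _ /=.
- by rewrite gaussE ?mulrA.
- by rewrite expdensE ?mulrA.
Qed.

Lemma mix_coef_inj : injective (fun t => (mix_quad_coef t, mix_lin_coef t)).
Proof.
move=> [j|k] [j'|k'] /= [].
- move=> /oppr_inj q l.
  have [mm ss] := gauss_param_inj (sg_gt0 j) (sg_gt0 j') q l.
  by congr inl; apply: gauss_inj; rewrite /= mm ss.
- by move=> /eqP; rewrite oppr_eq0 invr_eq0 gt_eqF // mulr_gt0 // exprn_gt0.
- by move=> /esym/eqP; rewrite oppr_eq0 invr_eq0 gt_eqF // mulr_gt0 // exprn_gt0.
- by move=> /oppr_inj l; congr inr; apply: expdens_inj; rewrite /= l.
Qed.

Lemma gauss_expdens_indep (M : R) beta gamma :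
  {ae (@lebesgue_measure R), forall x, M < x ->
     \sum_j beta j * gauss (mu j) (sg j) x
     + \sum_k gamma k * expdens (lam k) x = 0} ->
  (forall j, beta j = 0) /\ (forall k, gamma k = 0).
Proof.
move=> sum0; pose M0 := Num.max M 0.
pose g x :=
  \sum_t mix_weight beta gamma t * expquad (mix_quad_coef t) (mix_lin_coef t) x.
have g0 : forall x, `]M0, +oo[%classic x -> g x = 0.
  apply: continuous_ae_eq0; first exact: rray_open.
  - apply: filterS sum0 => x /=.
    rewrite in_itv /= andbT gt_max => sum0x /andP[Mx x0].
    by rewrite /g -gauss_expdens_sumE ?sum0x ?ltW.
  - move=> x _; apply: (@continuous_big _ _ +%R 0 xpredT add_continuous) => t _.
    by move=> y; apply: cvgMl_tmp; exact: continuous_expquad.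
have w0 : forall t, mix_weight beta gamma t = 0.
  apply: (expquad_indep mix_coef_inj); near=> x; apply: g0.
  by rewrite /= in_itv andbT; near: x; apply: nbhs_pinfty_gt; exact: num_real.
split=> [j|k].
  have /eqP := w0 (inl j).
  have scale_neq0 := gt_eqF (gauss_scale_gt0 (mu j) (sg_gt0 j)).
  by rewrite /= mulf_eq0 scale_neq0 orbF => /eqP.
by have /eqP := w0 (inr k); rewrite /= mulf_eq0 (gt_eqF (lam_gt0 k)) orbF => /eqP.
Unshelve. all: end_near. Qed.

End GaussExpdens.

Section Monomials.
Context {R : realType}.

Lemma imonoE (k : nat) (a b x : R) :
  imono k a b x = if a <= x < b then x ^+ k else 0.
Proof.
by rewrite /imono /chi asboolb in_itv /=; case: ifP; rewrite ?mulr1 ?mulr0.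
Qed.

Lemma imono_geb (k : nat) (a b x : R) : b <= x -> imono k a b x = 0.
Proof. by move=> bx; rewrite imonoE ifF // [x < b]ltNge bx andbF. Qed.

Lemma imono_ge0 (k : nat) (a b x : R) :
  half_open_interval (supp (imono k a b)) -> 0 <= imono k a b x.
Proof.
move=> [c [d [cd suppE]]]; rewrite leNgt; apply/negP => mx_lt0.
have : supp (imono k a b) c by rewrite suppE /= in_itv /= lexx cd.
move: mx_lt0; rewrite /supp /= !imonoE.
case: ifP => [/andP[ax xb] xk_lt0|]; last by rewrite ltxx.
case: ifP => [/andP[ac cb] ck_gt0|]; last by rewrite ltxx.
have k_odd : odd k by apply: contraTT xk_lt0 => /exprn_even_lt0 ->.
rewrite exprn_odd_lt0 // in xk_lt0; rewrite exprn_odd_gt0 // in ck_gt0.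
have : supp (imono k a b) (c / 2).
  by rewrite /supp /= imonoE ifT ?exprn_gt0 ?divr_gt0 //; apply/andP; split; lra.
by rewrite suppE /= in_itv /= => /andP[cc _]; lra.
Qed.

Lemma imono_supp_eq (k : nat) (a b x : R) :
  half_open_interval (supp (imono k a b)) ->
  imono k a b x = x ^+ k * chi (supp (imono k a b)) x.
Proof.
move=> supp_itv; rewrite /chi; case: asboolP => [|x_supp]; rewrite /supp /=.
  by rewrite imonoE mulr1; case: ifP => //; rewrite ltxx.
by rewrite mulr0; apply/eqP; rewrite eq_le imono_ge0 // leNgt andbT; exact/negP.
Qed.

Lemma imono_eq_supp (k : nat) (a b a' b' : R) :
  half_open_interval (supp (imono k a b)) ->
  supp (imono k a b) = supp (imono k a' b') -> imono k a b = imono k a' b'.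
Proof.
move=> supp_itv suppE; have supp_itv' := supp_itv; rewrite suppE in supp_itv'.
by apply/funext => x; rewrite imono_supp_eq // [RHS]imono_supp_eq // suppE.
Qed.

Lemma poly_eq0_on_itv (p : {poly R}) (c d : R) : c < d ->
  {in `]c, d[, forall x, p.[x] = 0} -> p = 0.
Proof.
move=> cd p0.
pose f (i : nat) := c + (d - c) / (i.+2)%:R.
apply: (@roots_geq_poly_eq0 _ p [seq f i | i <- iota 0 (size p)]).
- apply/allP => y /mapP[i _ ->]; apply/eqP; apply: p0.
  have dc : 0 < d - c by rewrite subr_gt0.
  have q0 : 0 < (d - c) / (i.+2)%:R by rewrite divr_gt0 // ltr0n.
  have q1 : (d - c) / (i.+2)%:R < d - c.
    by rewrite ltr_pdivrMr ?ltr0n // ltr_pMr // ltr1n.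
  rewrite in_itv /= /f; move: q0 q1; set q := (d - c) / _ => q0 q1.
  by apply/andP; split; lra.
- rewrite map_inj_uniq ?iota_uniq // => i j; rewrite /f => /addrI.
  have dc : d - c != 0 by rewrite subr_eq0 gt_eqF.
  by move/(mulfI dc)/invr_inj/eqP; rewrite eqr_nat => /eqP [].
- by rewrite size_map size_iota.
Qed.

Lemma imono_indep (H : set (set R)) (I : nat) (km : 'I_I -> nat)
    (am bm alpha : 'I_I -> R) :
  (forall h, H h -> half_open_interval h) ->
  (forall h1 h2, H h1 -> H h2 -> h1 <> h2 -> h1 `&` h2 = set0) ->
  (forall i, H (supp (imono (km i) (am i) (bm i)))) ->
  injective (fun i => imono (km i) (am i) (bm i)) ->
  {ae (@lebesgue_measure R), forall x,
     \sum_i alpha i * imono (km i) (am i) (bm i) x = 0} ->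
  forall i, alpha i = 0.
Proof.
move=> H_itv H_disj H_supp m_inj sum0 i0.
pose m i := imono (km i) (am i) (bm i).
pose S i := `[< supp (m i) = supp (m i0) >].
have [c [d [cd suppE]]] := H_itv _ (H_supp i0).
have m_itv i x : x \in `]c, d[ ->
    imono (km i) (am i) (bm i) x = if S i then x ^+ km i else 0.
  rewrite in_itv /= => /andP[cx xd].
  have x_i0 : supp (m i0) x by rewrite suppE /= in_itv /= (ltW cx) xd.
  rewrite /m imono_supp_eq /S /chi; last exact: H_itv.
  case: (asboolP (supp (m i) = supp (m i0))) => [Se|ne].
    by rewrite Se asboolT ?mulr1.
  rewrite asboolF ?mulr0 // => x_i.
  by have /seteqP[/(_ x (conj x_i x_i0))] := H_disj _ _ (H_supp i) (H_supp i0) ne.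
pose p := \sum_(i | S i) alpha i *: 'X^(km i).
have p0 : p = 0.
  apply: (poly_eq0_on_itv cd); apply: continuous_ae_eq0; first exact: itv_open.
  - apply: filterS sum0 => x sum0x /= x_cd.
    rewrite -sum0x horner_sum big_mkcond; apply: eq_bigr => i _ /=.
    rewrite (m_itv i x x_cd).
    by case: (S i); rewrite ?hornerZ ?hornerXn ?mulr0 ?horner0.
  - by move=> x _; exact: continuous_horner.
have S_i0 : S i0 by exact/asboolP.
have coef_p : p`_(km i0) = alpha i0.
  rewrite coef_sum (bigD1 i0) //= coefZ coefXn eqxx mulr1 big1 ?addr0 //.
  move=> i /andP[/asboolP Si ne]; rewrite coefZ coefXn.
  case: eqP => [k_eq|]; last by rewrite mulr0.
  case/negP: ne; apply/eqP/m_inj; rewrite /= k_eq.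
  by apply: imono_eq_supp; [exact: H_itv (H_supp i) | rewrite /m k_eq in Si].
by rewrite -coef_p p0 coef0.
Qed.

End Monomials.

Theorem lemma14 (R : realType) (H : set (set R)) (I J K : nat)
  (km : 'I_I -> nat) (am bm : 'I_I -> R)
  (mu sg : 'I_J -> R) (lam : 'I_K -> R) :
  (forall h, H h -> half_open_interval h) ->
  (forall h1 h2, H h1 -> H h2 -> h1 <> h2 -> h1 `&` h2 = set0) ->
  (forall i, am i < bm i) ->
  (forall i, H (supp (imono (km i) (am i) (bm i)))) ->
  injective (fun i => imono (km i) (am i) (bm i)) ->
  (forall j, 0 < sg j) ->
  injective (fun j => gauss (mu j) (sg j)) ->
  (forall k, 0 < lam k) ->
  injective (fun k => expdens (lam k)) ->
  forall (alpha : 'I_I -> R) (beta : 'I_J -> R) (gamma : 'I_K -> R),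
    {ae (@lebesgue_measure R), forall x : R,
       \sum_(i < I) alpha i * imono (km i) (am i) (bm i) x
     + \sum_(j < J) beta j * gauss (mu j) (sg j) x
     + \sum_(k < K) gamma k * expdens (lam k) x = 0} ->
    (forall i, alpha i = 0) /\ (forall j, beta j = 0) /\ (forall k, gamma k = 0).
Proof.
move=> H_itv H_disj _ H_supp m_inj sg_gt0 g_inj lam_gt0 e_inj.
move=> alpha beta gamma sum0.
pose M := \sum_i `|bm i|.
have bm_le i : bm i <= M.
  by rewrite (le_trans (ler_norm _)) // /M (bigD1 i) //= lerDl sumr_ge0.
have [beta0 gamma0] : (forall j, beta j = 0) /\ (forall k, gamma k = 0).
  apply: (gauss_expdens_indep sg_gt0 g_inj lam_gt0 e_inj (M := M)).
  apply: filterS sum0 => x + Mx; rewrite big1 ?add0r // => i _.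
  by rewrite imono_geb ?mulr0 // (le_trans (bm_le i)) ?ltW.
split=> //; apply: imono_indep H_itv H_disj H_supp m_inj _.
apply: filterS sum0 => x; rewrite [X in _ + X]big1 ?addr0 => [|k _]; last first.
  by rewrite gamma0 mul0r.
by rewrite [X in _ + X]big1 ?addr0 // => j _; rewrite beta0 mul0r.
Qed.
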